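(* $\mathsf{ICK}\oplus(p\mathrel{\Box\!\!\!\rightarrow} p)$ is sound and complete with respect to the class of conditional frames $(X,\leq,\mathcal{R})$ satisfying $R_a[x]\subseteq a$ for all $x\in X$ and all upsets $a$.
   Context: Formulas: $\phi ::= p\mid\bot\mid\phi\wedge\phi\mid\phi\vee\phi\mid\phi\to\phi\mid\phi\mathrel{\Box\!\!\!\rightarrow}\phi$. $\mathsf{ICK}\oplus\Gamma$ is the smallest set containing intuitionistic propositional logic, $\Gamma$, $(p\mathrel{\Box\!\!\!\rightarrow}(q\wedge r))\leftrightarrow((p\mathrel{\Box\!\!\!\rightarrow} q)\wedge(p\mathrel{\Box\!\!\!\rightarrow} r))$ and $(p\mathrel{\Box\!\!\!\rightarrow}\top)\leftrightarrow\top$, closed under uniform substitution, modus ponens and congruence rules for both arguments of $\mathrel{\Box\!\!\!\rightarrow}$. A conditional frame is $(X,\leq,\mathcal{R})$, $(X,\leq)$ a nonempty preorder, $\mathcal{R}=\{R_a\mid a\text{ an upset}\}$ with $(\leq\circ R_a)\subseteq(R_a\circ\leq)$; valuations assign upsets to letters and $x\models\phi\mathrel{\Box\!\!\!\rightarrow}\psi$ iff every $y$ with $xR_{V(\phi)}y$ satisfies $\psi$. $R_a[x]=\{y\mid xR_ay\}$. *)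

Inductive form : Set :=
| Var  : nat -> form
| Bot  : form
| And  : form -> form -> form
| Or   : form -> form -> form
| Imp  : form -> form -> form
| Cond : form -> form -> form.

Definition Top : form := Imp Bot Bot.
Definition Iff (a b : form) : form := And (Imp a b) (Imp b a).

Fixpoint subst (s : nat -> form) (f : form) : form :=
  match f with
  | Var n => s n
  | Bot => Bot
  | And a b => And (subst s a) (subst s b)
  | Or a b => Or (subst s a) (subst s b)
  | Imp a b => Imp (subst s a) (subst s b)
  | Cond a b => Cond (subst s a) (subst s b)
  end.

Definition p_ : form := Var 0.
Definition q_ : form := Var 1.
Definition r_ : form := Var 2.

Inductive ICK_id : form -> Prop :=
| ipc_k  a b   : ICK_id (Imp a (Imp b a))
| ipc_s  a b c : ICK_id (Imp (Imp a (Imp b c)) (Imp (Imp a b) (Imp a c)))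
| ipc_ai a b   : ICK_id (Imp a (Imp b (And a b)))
| ipc_ae1 a b  : ICK_id (Imp (And a b) a)
| ipc_ae2 a b  : ICK_id (Imp (And a b) b)
| ipc_oi1 a b  : ICK_id (Imp a (Or a b))
| ipc_oi2 a b  : ICK_id (Imp b (Or a b))
| ipc_oe a b c : ICK_id (Imp (Imp a c) (Imp (Imp b c) (Imp (Or a b) c)))
| ipc_efq a    : ICK_id (Imp Bot a)
| ax_and  : ICK_id (Iff (Cond p_ (And q_ r_)) (And (Cond p_ q_) (Cond p_ r_)))
| ax_top  : ICK_id (Iff (Cond p_ Top) Top)
| ax_id   : ICK_id (Cond p_ p_)
| r_subst s f : ICK_id f -> ICK_id (subst s f)
| r_mp a b : ICK_id (Imp a b) -> ICK_id a -> ICK_id b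
| r_congl a b c : ICK_id (Iff a b) -> ICK_id (Iff (Cond a c) (Cond b c))
| r_congr a b c : ICK_id (Iff a b) -> ICK_id (Iff (Cond c a) (Cond c b)).

Definition upset {X : Type} (le : X -> X -> Prop) (a : X -> Prop) : Prop :=
  forall x y, le x y -> a x -> a y.

(** Conditional frames (X, <=, R).  R a is only constrained (and only used)
    for upsets a.  Coherence: (<= ; R_a) included in (R_a ; <=), i.e.
    x <= x' and x' R_a z imply x R_a y <= z for some y. *)
Record cframe : Type := {
  W : Type;
  le : W -> W -> Prop;
  le_refl : forall x, le x x;
  le_trans : forall x y z, le x y -> le y z -> le x z;
  W_nonempty : inhabited W;
  R : (W -> Prop) -> W -> W -> Prop;
  R_coh : forall a, upset le a ->
    forall x x' z, le x x' -> R a x' z -> exists y, R a x y /\ le y z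
}.

Fixpoint sat (F : cframe) (V : nat -> W F -> Prop) (x : W F) (f : form) : Prop :=
  match f with
  | Var n => V n x
  | Bot => False
  | And a b => sat F V x a /\ sat F V x b
  | Or a b => sat F V x a \/ sat F V x b
  | Imp a b => forall y, le F x y -> sat F V y a -> sat F V y b
  | Cond a b => forall y, R F (fun z => sat F V z a) x y -> sat F V y b
  end.

Definition valuation (F : cframe) (V : nat -> W F -> Prop) : Prop :=
  forall n, upset (le F) (V n).

Definition valid_in (F : cframe) (f : form) : Prop :=
  forall V, valuation F V -> forall x, sat F V x f.

Definition cond_reflexive (F : cframe) : Prop :=
  forall a, upset (le F) a -> forall x y, R F a x y -> a y.

From Stdlib Require Import Classical FunctionalExtensionality PropExtensionality.
From Stdlib Require Import List Lia Cantor.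
Import ListNotations.

(* Soundness: truth is persistent along <=, and p []-> p is valid because
   R_a[x] is contained in a, the truth set of p.
   Completeness: in the canonical frame of prime theories, u R_a v holds when a
   is the truth set of some phi and v contains every psi with phi []-> psi in u.
   The frame condition follows from phi []-> phi in u.  In the truth lemma for
   []->, the set { psi | phi []-> psi in u } is closed under derivation (by
   necessitation and the conjunction axiom), so a Lindenbaum extension of it
   avoiding psi is an R-successor; conversely, two formulas with the same truth
   set are provably equivalent, so left congruence makes R_a independent of the
   choice of phi. *)

Section Persistence.
Variables (F : cframe) (V : nat -> W F -> Prop).
Hypothesis HV : valuation F V.

Lemma sat_persistent f x y : le F x y -> sat F V x f -> sat F V y f.
Proof.
  revert x y; induction f; simpl; intros x y Hxy H.
  - exact (HV n x y Hxy H).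
  - exact H.
  - destruct H; split; eauto.
  - destruct H; [left | right]; eauto.
  - intros z Hyz Hz. apply H; [eapply le_trans; eauto | exact Hz].
  - intros z Hz.
    assert (Hup : upset (le F) (fun z => sat F V z f1)) by (intros u v; apply IHf1).
    destruct (R_coh F _ Hup x y z Hxy Hz) as [w [Hxw Hwz]].
    eapply IHf2; [exact Hwz | exact (H w Hxw)].
Qed.

Lemma valuation_subst (s : nat -> form) : valuation F (fun n z => sat F V z (s n)).
Proof. intros n x y; apply sat_persistent. Qed.

End Persistence.

Lemma sat_subst F V s f x :
  sat F V x (subst s f) <-> sat F (fun n z => sat F V z (s n)) x f.
Proof.
  revert x; induction f; simpl; intros x; try tauto.
  - rewrite IHf1, IHf2; tauto.
  - rewrite IHf1, IHf2; tauto.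
  - split; intros H y Hy; specialize (H y Hy); rewrite ?IHf1, ?IHf2 in *; tauto.
  - assert (E : (fun z => sat F V z (subst s f1))
              = (fun z => sat F (fun n z => sat F V z (s n)) z f1)).
    { apply functional_extensionality; intro z.
      apply propositional_extensionality, IHf1. }
    rewrite E; split; intros H y Hy; apply IHf2, H, Hy.
Qed.

Lemma valid_iff_sat F a b : valid_in F (Iff a b) ->
  forall V, valuation F V -> forall x, sat F V x a <-> sat F V x b.
Proof.
  intros Hab V HV x; destruct (Hab V HV x) as [Hl Hr].
  split; [apply Hl | apply Hr]; apply le_refl.
Qed.

Lemma soundness F : cond_reflexive F -> forall f, ICK_id f -> valid_in F f.
Proof.
  intros HF f Hf; induction Hf; intros V HV x; simpl in *.
  - intros y _ Ha z Hyz _. eapply sat_persistent; eauto.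
  - intros y _ H1 z Hyz H2 u Hzu Hu.
    assert (Hyu : le F y u) by (eapply le_trans; eauto).
    apply (H1 u Hyu Hu u (le_refl F u)), H2; auto.
  - intros y _ Ha z Hyz Hb. split; [eapply sat_persistent; eauto | exact Hb].
  - intros y _ [H _]; exact H.
  - intros y _ [_ H]; exact H.
  - intros y _ H; left; exact H.
  - intros y _ H; right; exact H.
  - intros y _ H1 z Hyz H2 u Hzu [Hu | Hu].
    + apply H1; [eapply le_trans; eauto | exact Hu].
    + apply H2; [exact Hzu | exact Hu].
  - intros y _ [].
  - split.
    + intros y _ H; split; intros z Hz; apply (H z Hz).
    + intros y _ [H1 H2] z Hz; split; auto.
  - split.
    + intros y _ _ z _ [].
    + intros y _ _ z _ u _ [].
  - intros y Hy. exact (HF _ (HV 0) x y Hy).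
  - apply sat_subst, IHHf, valuation_subst, HV.
  - apply (IHHf1 V HV x x (le_refl F x)), IHHf2, HV.
  - replace (fun z => sat F V z a) with (fun z => sat F V z b).
    + split; intros y _ H; exact H.
    + apply functional_extensionality; intro z.
      apply propositional_extensionality, iff_sym, (valid_iff_sat F a b IHHf V HV).
  - split; intros y _ H z Hz; apply (valid_iff_sat F a b IHHf V HV), H, Hz.
Qed.

Inductive derives (G : form -> Prop) : form -> Prop :=
| der_thm f : ICK_id f -> derives G f
| der_hyp f : G f -> derives G f
| der_mp a b : derives G (Imp a b) -> derives G a -> derives G b.

Lemma derives_mono (G H : form -> Prop) f :
  (forall x, G x -> H x) -> derives G f -> derives H f.
Proof.
  intros GH D; induction D; [apply der_thm | apply der_hyp | eapply der_mp]; eauto.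
Qed.

Lemma derives_empty f : derives (fun _ => False) f -> ICK_id f.
Proof. induction 1; [auto | contradiction | eapply r_mp; eauto]. Qed.

Lemma imp_refl a : ICK_id (Imp a a).
Proof.
  eapply r_mp; [eapply r_mp; [apply (ipc_s a (Imp a a) a) | apply ipc_k] | apply (ipc_k a a)].
Qed.

Lemma deduction G a b : derives (fun x => G x \/ x = a) b -> derives G (Imp a b).
Proof.
  intro D; induction D as [f Hf | f [Hf | ->] | c d _ IHcd _ IHc].
  - eapply der_mp; [apply der_thm, ipc_k | apply der_thm, Hf].
  - eapply der_mp; [apply der_thm, ipc_k | apply der_hyp, Hf].
  - apply der_thm, imp_refl.
  - eapply der_mp; [eapply der_mp; [apply der_thm, ipc_s | exact IHcd] | exact IHc].
Qed.

Lemma imp_of_derives a b : derives (fun x => x = a) b -> ICK_id (Imp a b).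
Proof.
  intro D; apply derives_empty, deduction.
  eapply derives_mono; [| exact D]; simpl; auto.
Qed.

Lemma iff_intro a b : ICK_id (Imp a b) -> ICK_id (Imp b a) -> ICK_id (Iff a b).
Proof. intros; eapply r_mp; [eapply r_mp; [apply ipc_ai |] |]; eauto. Qed.

Lemma iff_elim_l a b : ICK_id (Iff a b) -> ICK_id (Imp a b).
Proof. intros; eapply r_mp; [apply ipc_ae1 |]; eauto. Qed.

Lemma iff_elim_r a b : ICK_id (Iff a b) -> ICK_id (Imp b a).
Proof. intros; eapply r_mp; [apply ipc_ae2 |]; eauto. Qed.

Definition subst3 (a b c : form) (n : nat) : form :=
  match n with 0 => a | 1 => b | 2 => c | _ => Var n end.

Lemma cond_and a b c : ICK_id (Iff (Cond a (And b c)) (And (Cond a b) (Cond a c))).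
Proof. exact (r_subst (subst3 a b c) _ ax_and). Qed.

Lemma cond_top a : ICK_id (Iff (Cond a Top) Top).
Proof. exact (r_subst (subst3 a a a) _ ax_top). Qed.

Lemma cond_id a : ICK_id (Cond a a).
Proof. exact (r_subst (subst3 a a a) _ ax_id). Qed.

Lemma cond_nec a b : ICK_id b -> ICK_id (Cond a b).
Proof.
  intro Hb.
  assert (Htop : ICK_id Top) by apply ipc_efq.
  assert (E : ICK_id (Iff Top b)) by (apply iff_intro; eapply r_mp; eauto using ipc_k).
  eapply r_mp; [apply iff_elim_l, r_congr, E |].
  eapply r_mp; [apply (iff_elim_r _ _ (cond_top a)) | exact Htop].
Qed.

Lemma cond_mono a b c : ICK_id (Imp b c) -> ICK_id (Imp (Cond a b) (Cond a c)).
Proof.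
  intro H.
  assert (E : ICK_id (Iff b (And b c))).
  { apply iff_intro; [| apply ipc_ae1].
    apply imp_of_derives.
    eapply der_mp; [eapply der_mp; [apply der_thm, ipc_ai | apply der_hyp; auto] |].
    eapply der_mp; [apply der_thm, H | apply der_hyp; auto]. }
  apply imp_of_derives.
  eapply der_mp; [apply der_thm, ipc_ae2 |].
  eapply der_mp; [apply der_thm, iff_elim_l, cond_and |].
  eapply der_mp; [apply der_thm, iff_elim_l, r_congr, E | apply der_hyp; auto].
Qed.

Fixpoint levels (n : nat) : list form :=
  match n with
  | 0 => [Bot; Var 0]
  | S m => let l := levels m in
      Bot :: Var (S m) :: l ++
      flat_map (fun x => flat_map (fun y => [And x y; Or x y; Imp x y; Cond x y]) l) l
  end.

Lemma levels_mono n m f : n <= m -> In f (levels n) -> In f (levels m).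
Proof.
  induction 1; intro Hf; [exact Hf |].
  simpl; right; right; apply in_or_app; left; auto.
Qed.

Lemma levels_step n a b c : In a (levels n) -> In b (levels n) ->
  In c [And a b; Or a b; Imp a b; Cond a b] -> In c (levels (S n)).
Proof.
  intros Ha Hb Hc; simpl; right; right; apply in_or_app; right.
  apply in_flat_map; exists a; split; [exact Ha |].
  apply in_flat_map; exists b; split; [exact Hb | exact Hc].
Qed.

Lemma levels_exhaust f : exists n, In f (levels n).
Proof.
  induction f as [n | | f1 [n1 H1] f2 [n2 H2] | f1 [n1 H1] f2 [n2 H2]
                | f1 [n1 H1] f2 [n2 H2] | f1 [n1 H1] f2 [n2 H2]];
    try (exists (S (max n1 n2)); apply (levels_step (max n1 n2) f1 f2);
         [ eapply levels_mono; [| exact H1]; lia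
         | eapply levels_mono; [| exact H2]; lia
         | simpl; tauto ]).
  - exists n; destruct n; simpl; auto.
  - exists 0; simpl; auto.
Qed.

Definition enum (k : nat) : form := let (n, i) := Cantor.of_nat k in nth i (levels n) Bot.

Lemma enum_surj f : exists k, enum k = f.
Proof.
  destruct (levels_exhaust f) as [n H]. destruct (In_nth _ _ Bot H) as [i [_ Hi]].
  exists (Cantor.to_nat (n, i)). unfold enum. rewrite Cantor.cancel_of_to. exact Hi.
Qed.

Record prime_theory : Type := {
  mem :> form -> Prop;
  mem_closed : forall f, derives mem f -> mem f;
  mem_prime : forall a b, mem (Or a b) -> mem a \/ mem b;
  mem_consistent : ~ mem Bot
}.

Section Lindenbaum.
Variables (G : form -> Prop) (phi : form).
Hypothesis G_phi : ~ derives G phi.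

Fixpoint chain (n : nat) : form -> Prop :=
  match n with
  | 0 => G
  | S m => fun x => chain m x \/
      (x = enum m /\ ~ derives (fun y => chain m y \/ y = enum m) phi)
  end.

Lemma chain_mono n m x : n <= m -> chain n x -> chain m x.
Proof. induction 1; simpl; auto. Qed.

Lemma chain_not_derives n : ~ derives (chain n) phi.
Proof.
  induction n as [| n IHn]; simpl; auto.
  destruct (classic (derives (fun y => chain n y \/ y = enum n) phi)) as [H | H];
    intro D; [apply IHn | apply H]; eapply derives_mono; try exact D;
    simpl; intros x; tauto.
Qed.

Definition chain_union (x : form) : Prop := exists n, chain n x.

Lemma chain_union_compact f : derives chain_union f -> exists n, derives (chain n) f.
Proof.
  induction 1 as [f Hf | f [n Hn] | a b _ [n1 H1] _ [n2 H2]].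
  - exists 0; apply der_thm, Hf.
  - exists n; apply der_hyp, Hn.
  - exists (max n1 n2).
    eapply der_mp; eapply derives_mono; try eassumption;
      intros x Hx; eapply chain_mono; try exact Hx; lia.
Qed.

Lemma chain_union_not_derives : ~ derives chain_union phi.
Proof.
  intro D; destruct (chain_union_compact _ D) as [n Hn]; exact (chain_not_derives n Hn).
Qed.

Lemma chain_union_maximal a : ~ chain_union a ->
  derives chain_union (Imp a phi).
Proof.
  intro Ha; apply deduction.
  destruct (enum_surj a) as [n <-].
  destruct (classic (derives (fun y => chain n y \/ y = enum n) phi)) as [H | H].
  - eapply derives_mono; [| exact H].
    intros x [Hx | Hx]; [left; exists n; exact Hx | right; exact Hx].
  - exfalso; apply Ha; exists (S n); simpl; auto.
Qed.

Lemma chain_union_closed f : derives chain_union f -> chain_union f.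
Proof.
  intro D; apply NNPP; intro Hf; apply chain_union_not_derives.
  eapply der_mp; [apply chain_union_maximal, Hf | exact D].
Qed.

Lemma chain_union_prime a b : chain_union (Or a b) -> chain_union a \/ chain_union b.
Proof.
  intro H; apply NNPP; intro Hab; apply chain_union_not_derives.
  eapply der_mp; [eapply der_mp; [eapply der_mp; [apply der_thm, (ipc_oe a b phi) |] |] |].
  - apply chain_union_maximal; tauto.
  - apply chain_union_maximal; tauto.
  - apply der_hyp, H.
Qed.

Lemma chain_union_consistent : ~ chain_union Bot.
Proof.
  intro H; apply chain_union_not_derives.
  eapply der_mp; [apply der_thm, ipc_efq | apply der_hyp, H].
Qed.

Lemma lindenbaum : exists u : prime_theory, (forall x, G x -> u x) /\ ~ u phi.
Proof.
  exists {| mem := chain_union; mem_closed := chain_union_closed;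
            mem_prime := chain_union_prime; mem_consistent := chain_union_consistent |}.
  split; simpl.
  - intros x Hx; exists 0; exact Hx.
  - intro H; apply chain_union_not_derives, der_hyp, H.
Qed.

End Lindenbaum.

Lemma mem_thm (u : prime_theory) f : ICK_id f -> u f.
Proof. intro; apply mem_closed, der_thm; auto. Qed.

Lemma mem_mp (u : prime_theory) a b : u (Imp a b) -> u a -> u b.
Proof. intros; apply mem_closed; eapply der_mp; apply der_hyp; eauto. Qed.

Lemma mem_and (u : prime_theory) a b : u a -> u b -> u (And a b).
Proof. intros; eapply mem_mp; [eapply mem_mp; [apply mem_thm, ipc_ai |] |]; eauto. Qed.

Lemma mem_cond_closed (u : prime_theory) a x :
  derives (fun t => u (Cond a t)) x -> u (Cond a x).
Proof.
  induction 1 as [f Hf | f Hf | b c _ IHbc _ IHb].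
  - apply mem_thm, cond_nec, Hf.
  - exact Hf.
  - assert (Hmp : ICK_id (Imp (And (Imp b c) b) c)).
    { apply imp_of_derives; eapply der_mp with (a := b).
      - eapply der_mp; [apply der_thm, ipc_ae1 | apply der_hyp; reflexivity].
      - eapply der_mp; [apply der_thm, ipc_ae2 | apply der_hyp; reflexivity]. }
    eapply mem_mp; [apply mem_thm, (cond_mono a _ _ Hmp) |].
    eapply mem_mp; [apply mem_thm, iff_elim_r, cond_and | apply mem_and; auto].
Qed.

Lemma provable_of_mem_imp a b :
  (forall u : prime_theory, u a -> u b) -> ICK_id (Imp a b).
Proof.
  intro H; apply NNPP; intro Hn.
  destruct (lindenbaum (fun x => x = a) b) as [u [Ha Hb]].
  - intro D; apply Hn, imp_of_derives, D.
  - apply Hb, H, Ha; reflexivity.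
Qed.

Definition theory_le (u v : prime_theory) : Prop := forall f, u f -> v f.

Definition canon_R (a : prime_theory -> Prop) (u v : prime_theory) : Prop :=
  exists phi, (forall w, a w <-> w phi) /\ (forall psi, u (Cond phi psi) -> v psi).

Definition canon (u0 : prime_theory) : cframe.
Proof.
  refine {| W := prime_theory; le := theory_le; R := canon_R; W_nonempty := inhabits u0 |}.
  - intros x f H; exact H.
  - intros x y z Hxy Hyz f H; auto.
  - intros a _ x x' z Hxx' [phi [Ha Hz]].
    exists z; split; [exists phi; split; auto | intros f H; exact H].
Defined.

Lemma canon_cond_reflexive u0 : cond_reflexive (canon u0).
Proof. intros a _ x y [phi [Ha Hy]]. apply Ha, Hy, mem_thm, cond_id. Qed.

Definition canon_val (u0 : prime_theory) : nat -> W (canon u0) -> Prop :=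
  fun n u => u (Var n).

Lemma canon_valuation u0 : valuation (canon u0) (canon_val u0).
Proof. intros n x y H; apply H. Qed.

Section Truth.
Variable u0 : prime_theory.

Notation csat := (sat (canon u0) (canon_val u0)).

Lemma truth_imp a b :
  (forall u, csat u a <-> u a) -> (forall u, csat u b <-> u b) ->
  forall u, csat u (Imp a b) <-> u (Imp a b).
Proof.
  intros IHa IHb u; simpl; split.
  - intro H; apply NNPP; intro Hn.
    destruct (lindenbaum (fun x => u x \/ x = a) b) as [v [Huv Hb]].
    + intro D; apply Hn, mem_closed, deduction, D.
    + apply Hb, IHb, H; [intros f Hf; apply Huv; auto | apply IHa, Huv; auto].
  - intros H v Huv Ha. apply IHb. eapply mem_mp; [apply Huv, H | apply IHa, Ha].
Qed.

Lemma truth_cond a b :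
  (forall u, csat u a <-> u a) -> (forall u, csat u b <-> u b) ->
  forall u, csat u (Cond a b) <-> u (Cond a b).
Proof.
  intros IHa IHb u; simpl; split.
  - intro H; apply NNPP; intro Hn.
    destruct (lindenbaum (fun t => u (Cond a t)) b) as [v [Huv Hb]].
    + intro D; apply Hn, mem_cond_closed, D.
    + apply Hb, IHb, H. exists a; split; auto.
  - intros H v [chi [Hchi Hv]]. apply IHb, Hv.
    assert (E : ICK_id (Iff a chi)).
    { apply iff_intro; apply provable_of_mem_imp; intros w Hw.
      - apply Hchi, IHa, Hw.
      - apply IHa, Hchi, Hw. }
    eapply mem_mp; [apply mem_thm, iff_elim_l, r_congl, E | exact H].
Qed.

Lemma truth f u : csat u f <-> u f.
Proof.
  revert u; induction f; intro u.
  - reflexivity.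
  - split; [contradiction | apply mem_consistent].
  - simpl; rewrite IHf1, IHf2; split.
    + intros [H1 H2]; apply mem_and; auto.
    + intro H; split; (eapply mem_mp; [apply mem_thm | exact H]);
        [apply ipc_ae1 | apply ipc_ae2].
  - simpl; rewrite IHf1, IHf2; split.
    + intros [H | H]; (eapply mem_mp; [apply mem_thm | exact H]);
        [apply ipc_oi1 | apply ipc_oi2].
    + apply mem_prime.
  - apply truth_imp; auto.
  - apply truth_cond; auto.
Qed.

End Truth.

Lemma completeness f :
  (forall F : cframe, cond_reflexive F -> valid_in F f) -> ICK_id f.
Proof.
  intro H; apply NNPP; intro Hn.
  destruct (lindenbaum (fun _ => False) f) as [u [_ Hu]].
  - intro D; apply Hn, derives_empty, D.
  - apply Hu, (truth u), H; [apply canon_cond_reflexive | apply canon_valuation].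
Qed.

Theorem proposition5p4 :
  forall f : form,
    ICK_id f <-> (forall F : cframe, cond_reflexive F -> valid_in F f).
Proof.
  intro f; split.
  - intros Hf F HF; exact (soundness F HF f Hf).
  - apply completeness.
Qed.
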